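(* There exist constants $C,\epsilon_0>0$ such that for all $L\in\mathbb N^{2}$ and $\eta>0$ with $\eta\,\mathrm{vol}\Lambda_{L}\le\epsilon_0$, all $v\in(2\mathbb Z)^{2}$ and all $z\in\mathbb C\setminus\mathbb T$, \[\mathbb P\Big(\mathrm{dist}\big(z,\sigma(U^{\Lambda_{L}+v}_{\omega}(0))\big)\le\eta\Big)\le C\,\eta\,\mathrm{vol}\Lambda_{L}.\]
   Context: Let $\{e_{\mu}\}_{\mu\in\mathbb Z^{2}}$ be the standard basis of $\ell^{2}(\mathbb Z^{2})$ and $\mathbb T=\{z\in\mathbb C:|z|=1\}$. Let $\Omega=\mathbb T^{\mathbb Z^{2}}$ with the product $\sigma$-algebra and probability $\mathbb P=\bigotimes_{\mu\in\mathbb Z^{2}}d\ell$, $d\ell$ normalized Lebesgue measure on $\mathbb T$. $D_{\omega}e_{\mu}=\omega_{\mu}e_{\mu}$. For $j,k\in\mathbb Z$ let $\mathcal H^{j,k}=\mathrm{span}\{e_{(2j,2k)},e_{(2j+1,2k)},e_{(2j+1,2k+1)},e_{(2j,2k+1)}\}$ and let $S_{\circlearrowleft}$ be the unitary acting on each $\mathcal H^{j,k}$ by the cyclic permutation $e_{(2j,2k)}\mapsto e_{(2j+1,2k)}\mapsto e_{(2j+1,2k+1)}\mapsto e_{(2j,2k+1)}\mapsto e_{(2j,2k)}$. For $L=(L_1,L_2)\in\mathbb N^{2}$ (positive integers) let $\Lambda_{L}=\mathbb Z^{2}\cap([-2L_{1},2L_{1}-1]\times[-2L_{2}+2,2L_{2}+1])$,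 $\mathrm{vol}\Lambda_L=4L_1L_2$, and for $v\in(2\mathbb Z)^2$ let $\Lambda_L+v$ be the translated box. Then $\ell^2(\Lambda_L+v)$ is the direct sum of $4L_1L_2$ of the blocks $\mathcal H^{j,k}$, and $U^{\Lambda_{L}+v}_{\omega}(0)$ denotes the restriction of $D_{\omega}S_{\circlearrowleft}$ to the invariant subspace $\ell^{2}(\Lambda_{L}+v)$. $\sigma(\cdot)$ denotes the spectrum. *)

From HB Require Import structures.
From mathcomp Require Import all_boot all_order all_algebra.
From mathcomp Require Import all_classical all_reals all_analysis.
From mathcomp Require Import complex.

Set Implicit Arguments.
Unset Strict Implicit.
Unset Printing Implicit Defensive.

Import Order.TTheory GRing.Theory Num.Theory.
Local Open Scope ring_scope.
Local Open Scope classical_set_scope.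

Definition site := (int * int)%type.

Definition par (x : int) : int := (x %% 2)%Z.

(* Predecessor of a site under the cyclic permutation of the 2x2 block
   H^{j,k}:  (2j,2k) -> (2j+1,2k) -> (2j+1,2k+1) -> (2j,2k+1) -> (2j,2k).
   S_cyc e_mu = e_{next mu}, hence (S_cyc f)(nu) = f (cyc_prev nu). *)
Definition cyc_prev (mu : site) : site :=
  let: (x, y) := mu in
  if par x == 0 then
    (if par y == 0 then (x, y + 1) else (x + 1, y))
  else
    (if par y == 0 then (x - 1, y) else (x, y - 1)).

(* Normalized Lebesgue measure on T is the image of the uniform law on [0,1)
   under t |-> e^{2 pi i t}. *)
Definition phase {R : realType} (t : R) : R[i] :=
  Complex (cos (2 * pi * t)) (sin (2 * pi * t)).

Definition in_box (L1 L2 : nat) (v : site) (mu : site) : Prop :=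
  (v.1 - 2 * (L1 : int) <= mu.1 <= v.1 + 2 * (L1 : int) - 1)%R /\
  (v.2 - 2 * (L2 : int) + 2 <= mu.2 <= v.2 + 2 * (L2 : int) + 1)%R.

Definition vol (L1 L2 : nat) : nat := 4 * L1 * L2.

(* ell^2(Lambda) modelled as the subspace of functions Z^2 -> C supported in
   Lambda (finite-dimensional). *)
Definition ell2_on {R : realType} (Lam : site -> Prop) : set (site -> R[i]) :=
  [set f | forall mu, ~ Lam mu -> f mu = 0].

(* U_omega(0) = D_omega S_cyc acting on functions:
   (D_omega S_cyc f)(nu) = omega_nu * f(cyc_prev nu). *)
Definition U_op {R : realType} (om : site -> R[i]) (f : site -> R[i]) :
  site -> R[i] := fun nu => om nu * f (cyc_prev nu).

Definition spectrum_on {R : realType} (V : set (site -> R[i]))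
    (T : (site -> R[i]) -> (site -> R[i])) : set R[i] :=
  [set lam | ~ (forall g, V g ->
       exists! f, V f /\ (fun nu => lam * f nu - T f nu) = g)].

Definition dist_set {R : realType} (z : R[i]) (A : set R[i]) : R :=
  inf [set (Normc.normc (z - lam)) | lam in A].

(* The phases (omega_mu) are i.i.d. with law dl (normalized Lebesgue measure
   on T): omega_mu = phase (theta mu) with theta mu i.i.d. uniform on [0,1). *)
Definition iid_uniform01 {d : measure_display} {Omega : measurableType d}
    {R : realType} (P : probability Omega R) (theta : site -> Omega -> R) : Prop :=
  (forall mu, measurable_fun setT (theta mu)) /\
  (forall mu (A : set R), measurable A ->
      P (theta mu @^-1` A) = (@lebesgue_measure R) (A `&` `[0%R, 1%R[)) /\
  (forall (F : seq site) (A : site -> set R), uniq F ->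
      (forall mu, measurable (A mu)) ->
      P (\bigcap_(mu in [set` F]) (theta mu @^-1` A mu)) =
      (\prod_(mu <- F) P (theta mu @^-1` A mu))%E).

(** On each 2x2 block the operator permutes the four sites cyclically, so its
fourth power is multiplication by the product of the four phases of the block.
Its spectrum is therefore the set of fourth roots
[phase ((theta_1 + theta_2 + theta_3 + theta_4 + k) / 4)], [k < 4], one family
for each site of the box.  For a fixed site and root, the event that this
eigenvalue lies within [eta] of [z] forces the sum of four independent uniform
variables into a set of diameter [O(eta)] inside every window of length 2;
locating three of the variables on a grid of mesh [1/N] confines the fourth to
an interval of length [O(eta + 1/N)], so the event has probability [O(eta)].
A union bound over the sites of the box and the four roots concludes. *)

From HB Require Import structures.
From mathcomp Require Import all_boot all_order all_algebra.
From mathcomp Require Import all_classical all_reals all_analysis.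
From mathcomp Require Import complex.
From mathcomp Require Import zify ring lra measurable_realfun.

Set Implicit Arguments.
Unset Strict Implicit.
Unset Printing Implicit Defensive.

Import Order.TTheory GRing.Theory Num.Theory numFieldNormedType.Exports.
Local Open Scope ring_scope.
Local Open Scope classical_set_scope.

Local Notation p := cyc_prev.

Ltac cyc_prev_cases :=
  rewrite /cyc_prev /par /=; repeat (case: ifP => /eqP ? /=);
  try lia; try (by congr pair; lia); try (by move=> [] *; lia).

Lemma cyc_prev4 (nu : site) : p (p (p (p nu))) = nu.
Proof. case: nu => x y; cyc_prev_cases. Qed.

Lemma cyc_prev_neq (nu : site) : p nu != nu.
Proof. by apply/eqP; case: nu => x y; cyc_prev_cases. Qed.

Lemma cyc_prev2_neq (nu : site) : p (p nu) != nu.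
Proof. by apply/eqP; case: nu => x y; cyc_prev_cases. Qed.

Lemma cyc_prev3_neq (nu : site) : p (p (p nu)) != nu.
Proof. by apply/eqP; case: nu => x y; cyc_prev_cases. Qed.

Lemma uniq_cyc_orbit (nu : site) : uniq [:: nu; p nu; p (p nu); p (p (p nu))].
Proof.
have n1 x : (x == p x) = false by rewrite eq_sym (negbTE (cyc_prev_neq x)).
have n2 x : (x == p (p x)) = false by rewrite eq_sym (negbTE (cyc_prev2_neq x)).
have n3 x : (x == p (p (p x))) = false by rewrite eq_sym (negbTE (cyc_prev3_neq x)).
by rewrite /= !in_cons !n1 !n2 !n3.
Qed.

Lemma in_box_cyc_prev L1 L2 (v nu : site) : (2 %| v.1)%Z -> (2 %| v.2)%Z ->
  in_box L1 L2 v (p nu) <-> in_box L1 L2 v nu.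
Proof.
case: v nu => a b [x y] /= ha hb; rewrite /in_box /cyc_prev /par /=.
by repeat (case: ifP => /eqP ? /=);
  split => -[/andP[? ?] /andP[? ?]]; split; apply/andP; split; lia.
Qed.

Section Spectrum.
Variable R : realType.
Notation C := R[i].
Variable om : site -> C.

Definition cyc_prod (nu : site) : C :=
  om nu * om (p nu) * om (p (p nu)) * om (p (p (p nu))).

Lemma cyc_prod_prev nu : cyc_prod (p nu) = cyc_prod nu.
Proof. rewrite /cyc_prod cyc_prev4; ring. Qed.

Definition lam_sub_U (lam : C) (f : site -> C) : site -> C :=
  fun nu => lam * f nu - U_op om f nu.

(* [U_op om] has order four up to the multiplication by [cyc_prod], so
   [lam_sub_U lam] is inverted by [lam^3 + lam^2 U + lam U^2 + U^3] up to
   the factor [lam^4 - cyc_prod]. *)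
Definition cyc_adjugate (lam : C) (h : site -> C) : site -> C :=
  fun nu => lam ^+ 3 * h nu + lam ^+ 2 * U_op om h nu
    + lam * U_op om (U_op om h) nu + U_op om (U_op om (U_op om h)) nu.

Lemma lam_sub_U_adjugate lam h nu :
  lam_sub_U lam (cyc_adjugate lam h) nu = (lam ^+ 4 - cyc_prod nu) * h nu.
Proof. rewrite /lam_sub_U /cyc_adjugate /U_op /cyc_prod cyc_prev4; ring. Qed.

Lemma adjugate_lam_sub_U lam h nu :
  cyc_adjugate lam (lam_sub_U lam h) nu = (lam ^+ 4 - cyc_prod nu) * h nu.
Proof. rewrite /lam_sub_U /cyc_adjugate /U_op /cyc_prod cyc_prev4; ring. Qed.

Variables (L1 L2 : nat) (v : site).
Hypotheses (hv1 : (2 %| v.1)%Z) (hv2 : (2 %| v.2)%Z).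
Notation V := (ell2_on (in_box L1 L2 v)).

Lemma ell2_on_U_op f : V f -> V (U_op om f).
Proof. by move=> Vf nu nu_out; rewrite /U_op Vf ?mulr0 // in_box_cyc_prev. Qed.

Lemma ell2_on_adjugate lam h : V h -> V (cyc_adjugate lam h).
Proof.
move=> Vh nu nu_out; have V1 := ell2_on_U_op Vh; have V2 := ell2_on_U_op V1.
by rewrite /cyc_adjugate Vh // V1 // V2 // (ell2_on_U_op V2) // !mulr0 !addr0.
Qed.

Section Resolvent.
Variable lam : C.
Hypothesis no_root : forall nu, in_box L1 L2 v nu -> lam ^+ 4 != cyc_prod nu.

Lemma lam_sub_U_inj f : V f -> (forall nu, lam_sub_U lam f nu = 0) -> f = fun _ => 0.
Proof.
move=> Vf f0; apply/funext => nu.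
have [nu_in|] := pselect (in_box L1 L2 v nu); last exact: Vf.
have /esym/eqP := adjugate_lam_sub_U lam f nu.
rewrite /cyc_adjugate /U_op !f0 !mulr0 !addr0 mulf_eq0 subr_eq0.
by rewrite (negbTE (no_root nu_in)) => /eqP.
Qed.

Lemma lam_sub_U_surj g : V g -> exists2 f, V f & lam_sub_U lam f = g.
Proof.
move=> Vg; pose f nu := cyc_adjugate lam g nu / (lam ^+ 4 - cyc_prod nu).
have Vf : V f by move=> nu nu_out; rewrite /f ell2_on_adjugate // mul0r.
exists f => //; apply/funext => nu.
have -> : lam_sub_U lam f nu = lam_sub_U lam (cyc_adjugate lam g) nu / (lam ^+ 4 - cyc_prod nu).
  by rewrite /lam_sub_U /U_op /f cyc_prod_prev; ring.
have [nu_in|nu_out] := pselect (in_box L1 L2 v nu).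
  by rewrite lam_sub_U_adjugate mulrAC divff ?mul1r // subr_eq0 no_root.
by rewrite lam_sub_U_adjugate Vg // mulr0 mul0r.
Qed.

End Resolvent.

Hypothesis om_neq0 : forall nu, om nu != 0.

Lemma lam_sub_U_eigen lam nu0 : in_box L1 L2 v nu0 -> lam ^+ 4 = cyc_prod nu0 ->
  exists2 f, V f & f nu0 != 0 /\ lam_sub_U lam f = fun _ => 0.
Proof.
move=> nu0_in root; pose delta nu : C := (nu == nu0)%:R.
have Vdelta : V delta by move=> nu nu_out; rewrite /delta; case: eqP => // E; rewrite E in nu_out.
exists (cyc_adjugate lam delta); first exact: ell2_on_adjugate.
split.
  rewrite /cyc_adjugate /U_op /delta eqxx.
  rewrite (negbTE (cyc_prev_neq _)) (negbTE (cyc_prev2_neq _)) (negbTE (cyc_prev3_neq _)).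
  rewrite !mulr0 !addr0 mulr1 expf_neq0 //; apply/eqP => lam0.
  by move: root; rewrite lam0 expr0n /cyc_prod => /esym/eqP; rewrite !mulf_eq0 !(negbTE (om_neq0 _)).
apply/funext => nu; rewrite lam_sub_U_adjugate /delta.
by case: eqP => [->|_]; rewrite ?root ?subrr ?mul0r ?mulr0.
Qed.

Lemma spectrum_onP lam : spectrum_on V (U_op om) lam <->
  exists2 nu, in_box L1 L2 v nu & lam ^+ 4 = cyc_prod nu.
Proof.
split => [not_bij|[nu0 nu0_in root] bij].
  apply: contrapT => no_root; apply: not_bij => g Vg.
  have {}no_root nu : in_box L1 L2 v nu -> lam ^+ 4 != cyc_prod nu.
    by move=> nu_in; apply/eqP => root; apply: no_root; exists nu.
  have [f Vf fg] := lam_sub_U_surj no_root Vg.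
  exists f; split => // f' [Vf' f'g].
  have Vd : V (fun nu => f nu - f' nu) by move=> nu nu_out; rewrite Vf // Vf' // subr0.
  change (lam_sub_U lam f' = g) in f'g.
  have d0 nu : lam_sub_U lam (fun x => f x - f' x) nu = 0.
    transitivity (lam_sub_U lam f nu - lam_sub_U lam f' nu).
      by rewrite /lam_sub_U /U_op; ring.
    by rewrite fg f'g subrr.
  apply/funext => nu; apply/eqP; rewrite -subr_eq0; apply/eqP.
  exact: (congr1 (fun d => d nu) (lam_sub_U_inj no_root Vd d0)).
have [f Vf [fnu0_neq0 f0]] := lam_sub_U_eigen nu0_in root.
have [f1 [_ f1_uniq]] := bij (fun _ => 0) (fun _ _ => erefl).
have f1_0 : f1 = fun _ => 0.
  by rewrite (f1_uniq (fun _ => 0)) //; split=> //; apply/funext => nu; rewrite /U_op !mulr0 subr0.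
by move: fnu0_neq0; rewrite -(f1_uniq f) ?f1_0 ?eqxx.
Qed.

End Spectrum.

Section Phase.
Variable R : realType.
Local Open Scope complex_scope.

Lemma phaseD (a b : R) : phase (a + b) = phase a * phase b.
Proof. by rewrite /phase mulrDr cosD sinD; simpc; congr Complex; ring. Qed.

Lemma phaseMn (a : R) k : phase (a *+ k) = phase a ^+ k.
Proof.
elim: k => [|k IH]; first by rewrite mulr0n expr0 /phase mulr0 cos0 sin0.
by rewrite mulrS phaseD IH exprS.
Qed.

Lemma phase_neq0 (a : R) : phase a != 0.
Proof.
apply/eqP => -[c0 s0]; have := cos2Dsin2 (2 * pi * a).
by rewrite c0 s0 expr0n /= addr0 => /esym/eqP; rewrite oner_eq0.
Qed.

Lemma phase_quarter : phase (1 / 4 : R) = 'i.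
Proof.
rewrite /phase (_ : 2 * pi * (1 / 4) = pi / 2 :> R); last by field.
by rewrite cos_pihalf sin_pihalf.
Qed.

Lemma phase_div4_addn (s : R) k : phase ((s + k%:R) / 4) = phase (s / 4) * 'i ^+ k.
Proof.
rewrite (_ : (s + k%:R) / 4 = s / 4 + (1 / 4) *+ k); last by rewrite -mulr_natl; field.
by rewrite phaseD phaseMn phase_quarter.
Qed.

Lemma phase_div4X4 (s : R) : phase (s / 4) ^+ 4 = phase s.
Proof. by rewrite -phaseMn; congr phase; rewrite -mulr_natr; field. Qed.

Lemma expr4_eq_phaseP (s : R) (lam : R[i]) :
  lam ^+ 4 = phase s <-> exists2 k, (k < 4)%N & lam = phase ((s + k%:R) / 4).
Proof.
have ii : ('i : R[i]) * 'i = -1 by simpc.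
have i4 : ('i : R[i]) ^+ 4 = 1 by rewrite !exprS expr0; simpc.
split => [lam4|[k _ ->]]; last first.
  by rewrite phase_div4_addn exprMn phase_div4X4 -exprM mulnC exprM i4 expr1n mulr1.
have mu_neq0 := phase_neq0 (s / 4).
pose zeta := lam / phase (s / 4).
have lamE k : zeta = 'i ^+ k -> lam = phase ((s + k%:R) / 4).
  by rewrite phase_div4_addn => <-; rewrite mulrC mulfVK.
have : (zeta - 1) * (zeta + 1) * ((zeta - 'i) * (zeta + 'i)) = 0.
  have -> : (zeta - 'i) * (zeta + 'i) = zeta ^+ 2 - 'i * 'i by ring.
  rewrite ii; transitivity (zeta ^+ 4 - 1); first ring.
  by rewrite exprMn exprVn lam4 -phase_div4X4 divff ?subrr // expf_neq0.
move/eqP; rewrite !mulf_eq0 !subr_eq0 !addr_eq0 => /orP[/orP[]|/orP[]] /eqP zetaE.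
- by exists 0%N => //; apply: lamE; rewrite expr0.
- by exists 2%N => //; apply: lamE; rewrite expr2 ii.
- by exists 1%N => //; apply: lamE; rewrite expr1.
- by exists 3%N => //; apply: lamE; rewrite exprS expr2 mulrA ii mulN1r.
Qed.

End Phase.

Section Geometry.
Variable R : realType.

Lemma cos1_le_cos (c : R) : 0 <= c <= 1 -> cos 1 <= cos c.
Proof.
move=> /andP[c0 c1]; have pi2 := @pi_ge2 R.
rewrite leNgt ltr_cos ?in_itv /= ?c0; first by lra.
- by apply/andP; split; lra.
- by apply/andP; split; lra.
Qed.

Lemma sin_ge_cos1_mul (y : R) : 0 <= y <= 1 -> cos 1 * y <= sin y.
Proof.
move=> /andP[y0 y1]; have [->|y_neq0] := eqVneq y 0; first by rewrite mulr0 sin0.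
have y_gt0 : 0 < y by rewrite lt_neqAle eq_sym y_neq0.
have [|c] := MVT y_gt0 (fun x _ => is_derive_sin x).
  exact/continuous_subspaceT/continuous_sin.
rewrite in_itv /= sin0 subr0 => /andP[c0 cy] ->; rewrite subr0 ler_pM2r //.
by apply: cos1_le_cos; apply/andP; split; lra.
Qed.

Lemma sin_ge_half_cos1_mul (y : R) : 0 <= y <= pi / 2 -> cos 1 / 2 * y <= sin y.
Proof.
move=> /andP[y0 ypi]; have c1 := @cos1_gt0 R.
have p2 := @pihalf_lt2 R.
have [y1|y1] := lerP y 1.
  by have := sin_ge_cos1_mul (y := y); rewrite y0 y1 /= => /(_ isT); nra.
have sin1 := sin_ge_cos1_mul (y := 1); rewrite ler01 lexx /= mulr1 in sin1.
have : sin 1 <= sin y.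
  rewrite leNgt ltr_sin ?in_itv /=; first by lra.
  - by apply/andP; split; have := @pihalf_ge1 R; lra.
  - by apply/andP; split; lra.
by nra.
Qed.

Lemma abs_sin_ge (x : R) : `|x| <= pi / 2 -> cos 1 / 2 * `|x| <= `|sin x|.
Proof.
have pi0 := @pi_ge0 R.
wlog x0 : x / 0 <= x => [hwlog|].
  have [/hwlog//|x_lt0] := lerP 0 x.
  by rewrite -normrN -(normrN (sin x)) -sinN; apply: hwlog; lra.
rewrite (ger0_norm x0) => xpi.
have sin_ge0 : 0 <= sin x by apply: sin_ge0_pi; apply/andP; split; lra.
by rewrite ger0_norm //; apply: sin_ge_half_cos1_mul; rewrite x0 xpi.
Qed.

Lemma normc_ge0 (w : R[i]) : 0 <= Normc.normc w.
Proof. by case: w => a b; exact: sqrtr_ge0. Qed.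

Lemma normc_phaseB2 (u u' : R) :
  Normc.normc (phase u - phase u') ^+ 2 = 4 * sin (pi * (u - u')) ^+ 2.
Proof.
rewrite /phase; simpc => /=; rewrite sqr_sqrtr ?addr_ge0 ?sqr_ge0 //.
set A := 2 * pi * u; set B := 2 * pi * u'; set x := pi * (u - u').
have := cosB A B; rewrite (_ : A - B = x *+ 2); last by rewrite /A /B /x mulr2n; ring.
rewrite cos_mulr2n cos2sin2 mulr2n.
by have := cos2Dsin2 A; have := cos2Dsin2 B; nra.
Qed.

(* The chord [|phase u - phase u'| = 2 |sin (pi (u - u'))|] is at most [2 eta]. *)
Lemma phase_dist_le (z : R[i]) (eta u u' : R) : `|u - u'| <= 1 / 2 ->
  Normc.normc (z - phase u) <= eta -> Normc.normc (z - phase u') <= eta ->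
  `|u - u'| <= eta / cos 1.
Proof.
move=> uu' zu zu'; have c1 := @cos1_gt0 R; have pi2 := @pi_ge2 R.
have chord : Normc.normc (phase u - phase u') <= 2 * eta.
  rewrite (_ : phase u - phase u' = (z - phase u') + - (z - phase u)); last by ring.
  by apply: le_trans (le_normcD _ _) _; rewrite normcN; lra.
have eta0 : 0 <= eta by apply: le_trans zu; exact: normc_ge0.
have := normc_phaseB2 u u'; set s := sin _ => chordE.
have s_le : `|s| <= eta.
  rewrite -(ler_pXn2r (n := 2)) ?nnegrE // real_normK ?num_real //.
  by have := normc_ge0 (phase u - phase u'); nra.
have d0 := normr_ge0 (u - u').
have x_le : `|pi * (u - u')| <= pi / 2.
  by rewrite normrM gtr0_norm ?pi_gt0 //; nra.
have := le_trans (abs_sin_ge x_le) s_le; rewrite normrM gtr0_norm ?pi_gt0 // => sin_ge.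
have cd : 0 <= cos 1 * `|u - u'| by rewrite mulr_ge0 // ltW.
by rewrite ler_pdivlMr //; nra.
Qed.

End Geometry.

Section UnionBound.
Context {d : measure_display} {T : measurableType d} {R : realType}.
Variable mu : {measure set T -> \bar R}.

Lemma measurable_seq_union (I : eqType) (s : seq I) (F : I -> set T) :
  (forall x, measurable (F x)) -> measurable [set w | exists2 x, x \in s & F x w].
Proof.
move=> mF; elim: s => [|y s IH].
  by rewrite (_ : [set w | _] = set0) //; apply/seteqP; split => // w [].
rewrite (_ : [set w | _] = F y `|` [set w | exists2 x, x \in s & F x w]).
  exact: measurableU.
apply/seteqP; split => w.
  by move=> [x]; rewrite in_cons => /orP[/eqP -> | xs] Fxw; [left | right; exists x].
by move=> [Fyw | [x xs Fxw]]; [exists y; rewrite ?mem_head | exists x; rewrite // in_cons xs orbT].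
Qed.

Lemma measure_seq_cover_le (I : eqType) (s : seq I) (F : I -> set T) (A : set T) (c : R) :
  measurable A -> (forall x, measurable (F x)) ->
  (forall x, x \in s -> mu (F x) <= c%:E)%E ->
  A `<=` [set w | exists2 x, x \in s & F x w] -> (mu A <= (c *+ size s)%:E)%E.
Proof.
elim: s A => [|x s IH] A mA mF muF AF.
  by rewrite (_ : A = set0) ?measure0 //; apply/seteqP; split => // w /AF [].
have mAF : measurable (A `\` F x) by exact: measurableD.
apply: (le_trans (y := mu (F x `|` (A `\` F x)))).
  apply: le_measure; rewrite ?inE //; first exact: measurableU.
  by move=> w Aw; have [|] := pselect (F x w); [left | right].
apply: le_trans (measureU2 _ _ _) _ => //; rewrite mulrS EFinD.
apply: leeD; first by apply: muF; rewrite mem_head.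
apply: IH => // [y ys|w [Aw Fxw]]; first by apply: muF; rewrite in_cons ys orbT.
have [y] := AF w Aw; rewrite in_cons => /orP[/eqP -> // | ys] Fyw; by exists y.
Qed.

End UnionBound.

Section Lebesgue01.
Variable R : realType.

Definition lebesgue01 (A : set R) := lebesgue_measure (A `&` `[0%R, 1%R[).

Lemma lebesgue01_itv_le (x y : R) b1 b2 : x <= y ->
  (lebesgue01 [set` Interval (BSide b1 x) (BSide b2 y)] <= (y - x)%:E)%E.
Proof.
move=> xy; apply: (le_trans (y := lebesgue_measure [set` Interval (BSide b1 x) (BSide b2 y)])).
  by apply: le_measure; rewrite ?inE; [apply: measurableI | | move=> ? []].
rewrite lebesgue_measure_itv /=; case: ifP => _; first by rewrite -EFinD.
by rewrite lee_fin subr_ge0.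
Qed.

Definition grid_itv (N i : nat) : set R := `[i%:R / N%:R, i.+1%:R / N%:R[.

Lemma grid_itvP (x : R) (N : nat) : (0 < N)%N -> 0 <= x < 1 ->
  exists i : 'I_N, grid_itv N i x.
Proof.
move=> N0 /andP[x0 x1]; have N_gt0 : 0 < N%:R :> R by rewrite ltr0n.
have xN0 : 0 <= x * N%:R by rewrite mulr_ge0 // ltW.
have truncN : (Num.truncn (x * N%:R) < N)%N.
  by rewrite truncn_lt_nat // -[X in _ < X]mul1r ltr_pM2r.
exists (Ordinal truncN); have /andP[lo hi] := truncn_itv xN0.
by rewrite /grid_itv /= in_itv /= ler_pdivrMr // ltr_pdivlMr // lo.
Qed.

Lemma lebesgue01_grid_itv (N i : nat) : (0 < N)%N ->
  (lebesgue01 (grid_itv N i) <= (N%:R^-1)%:E)%E.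
Proof.
move=> N0; apply: le_trans (lebesgue01_itv_le _ _ _) _.
  by rewrite ler_pM2r ?invr_gt0 ?ltr0n // ler_nat.
by rewrite lee_fin -mulrBl -natrB // subSnn mul1r.
Qed.

End Lebesgue01.

(* Scale 2 bounds the gap between [t + T] and [t0 + T0] when [t, t0] lie in
   [0, 1) and [T, T0] in a common cell of the grid used in [sum4_cover]. *)
Definition narrow (R : realType) (delta : R) (A : set R) :=
  forall s s', A s -> A s' -> `|s - s'| <= 2 -> `|s - s'| <= delta.

Lemma narrow_close (R : realType) (delta : R) A (t t0 T T0 : R) : narrow delta A ->
  A (t + T) -> A (t0 + T0) -> 0 <= t < 1 -> 0 <= t0 < 1 -> `|T - T0| <= 1 ->
  `|t - t0| <= delta + `|T - T0|.
Proof.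
move=> nA At At0 /andP[t_ge0 t_lt1] /andP[t0_ge0 t0_lt1] TT0.
rewrite (_ : t - t0 = t + T - (t0 + T0) - (T - T0)); last by ring.
apply: le_trans (ler_normB _ _) _; rewrite lerD2r; apply: nA => //.
by move: TT0; rewrite !ler_norml => /andP[? ?]; apply/andP; split; lra.
Qed.

Section IidUniform.
Context {d : measure_display} {Omega : measurableType d} {R : realType}.
Variables (P : probability Omega R) (theta : site -> Omega -> R).
Hypothesis iid : iid_uniform01 P theta.

Lemma measurable_theta_preimage mu (A : set R) :
  measurable A -> measurable (theta mu @^-1` A).
Proof. by case: iid => m_theta _ mA; rewrite -[_ @^-1` _]setTI; exact: m_theta. Qed.

Lemma prob_theta_outside01 mu : P (theta mu @^-1` ~` `[0%R, 1%R[) = 0%E.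
Proof.
case: iid => _ [law _]; rewrite law; last by apply: measurableC; exact: measurable_itv.
by rewrite setICl measure0.
Qed.

Variables (a b c e : site).

Lemma measurable_theta4 (A1 A2 A3 A4 : set R) :
  measurable A1 -> measurable A2 -> measurable A3 -> measurable A4 ->
  measurable [set w | A1 (theta a w) /\ A2 (theta b w) /\ A3 (theta c w) /\ A4 (theta e w)].
Proof.
move=> m1 m2 m3 m4; rewrite (_ : [set w | _] = theta a @^-1` A1 `&`
  (theta b @^-1` A2 `&` (theta c @^-1` A3 `&` theta e @^-1` A4))) //.
by repeat apply: measurableI; exact: measurable_theta_preimage.
Qed.

Hypothesis abce : uniq [:: a; b; c; e].

Lemma prob_theta4 (A1 A2 A3 A4 : set R) :
  measurable A1 -> measurable A2 -> measurable A3 -> measurable A4 ->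
  P [set w | A1 (theta a w) /\ A2 (theta b w) /\ A3 (theta c w) /\ A4 (theta e w)]
  = (lebesgue01 A1 * (lebesgue01 A2 * (lebesgue01 A3 * lebesgue01 A4)))%E.
Proof.
case: iid => _ [law indep] m1 m2 m3 m4.
move: (abce); rewrite /= !in_cons !in_nil !orbF !negb_or.
move=> /andP[/and3P[ab ac ae] /andP[/andP[bc be] /andP[ce _]]].
pose A mu := if mu == a then A1 else if mu == b then A2 else if mu == c then A3 else A4.
have mA mu : measurable (A mu) by rewrite /A; repeat case: ifP => _.
have Aa : A a = A1 by rewrite /A eqxx.
have Ab : A b = A2 by rewrite /A eq_sym (negbTE ab) eqxx.
have Ac : A c = A3 by rewrite /A eq_sym (negbTE ac) eq_sym (negbTE bc) eqxx.
have Ae : A e = A4.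
  by rewrite /A eq_sym (negbTE ae) eq_sym (negbTE be) eq_sym (negbTE ce).
have := indep _ A abce mA; rewrite !big_cons big_nil Aa Ab Ac Ae !law // mule1 => <-.
congr (P _); apply/seteqP; split => w /=.
  move=> [h1 [h2 [h3 h4]]] mu /=.
  by rewrite !in_cons in_nil orbF => /or4P[] /eqP ->; rewrite /preimage /= ?Aa ?Ab ?Ac ?Ae.
move=> H; have := H a; have := H b; have := H c; have := H e.
by rewrite /preimage /= !in_cons !eqxx ?orbT Aa Ab Ac Ae; do 4! move=> /(_ isT) ?.
Qed.

Definition sum4 w := theta a w + theta b w + theta c w + theta e w.

Lemma measurable_sum4 : measurable_fun setT sum4.
Proof. by case: iid => m_theta _; repeat apply: measurable_funD; apply: m_theta. Qed.

Variables (A : set R) (delta : R).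
Hypotheses (mA : measurable A) (delta_ge0 : 0 <= delta) (nA : narrow delta A).

Definition cell_low N (q : 'I_N * 'I_N * 'I_N) : R :=
  q.1.1%:R / N%:R + q.1.2%:R / N%:R + q.2%:R / N%:R.

Definition cell_fiber N (q : 'I_N * 'I_N * 'I_N) : set R :=
  [set t | 0 <= t < 1 /\ exists2 T, cell_low q <= T < cell_low q + 3 / N%:R & A (t + T)].

(* By narrowness of [A], all points of [cell_fiber q] lie within
   [delta + 3 / N] of this arbitrary one. *)
Definition cell_center N (q : 'I_N * 'I_N * 'I_N) : R := xget 0 (cell_fiber q).

Definition cell_event N (q : 'I_N * 'I_N * 'I_N) : set Omega :=
  let r := delta + 3 / N%:R in
  [set w | `[cell_center q - r, cell_center q + r] (theta a w) /\
    grid_itv N q.1.1 (theta b w) /\ grid_itv N q.1.2 (theta c w) /\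
    grid_itv N q.2 (theta e w)].

Lemma measurable_cell_event N q : measurable (@cell_event N q).
Proof. by apply: measurable_theta4 => //; exact: measurable_itv. Qed.

Lemma prob_cell_event N q : (0 < N)%N ->
  (P (@cell_event N q) <= (2 * (delta + 3 / N%:R) / N%:R ^+ 3)%:E)%E.
Proof.
move=> N_gt0; have N0 : 0 < N%:R :> R by rewrite ltr0n.
rewrite /cell_event prob_theta4 //; try exact: measurable_itv.
set x := cell_center q; set r := delta + _.
have r_ge0 : 0 <= r by rewrite addr_ge0 // divr_ge0 // ltW.
have Ia : (lebesgue01 `[(x - r)%R, (x + r)%R] <= (2 * r)%:E)%E.
  by rewrite (_ : 2 * r = x + r - (x - r)); [apply: lebesgue01_itv_le; lra | ring].
have Ig i := @lebesgue01_grid_itv R N i N_gt0.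
apply: le_trans (lee_pmul _ _ Ia (lee_pmul _ _ (Ig _) (lee_pmul _ _ (Ig _) (Ig _)))) _;
  rewrite ?mule_ge0 //.
by rewrite -!EFinM lee_fin le_eqVlt; apply/orP; left; apply/eqP; field; rewrite gt_eqF.
Qed.

Definition outside_unit_cube : set Omega :=
  [set w | exists2 mu, mu \in [:: a; b; c; e] & (theta mu @^-1` ~` `[0%R, 1%R[) w].

Lemma sum4_cover N : (3 <= N)%N ->
  sum4 @^-1` A `\` outside_unit_cube `<=`
  [set w | exists2 q, q \in enum {: 'I_N * 'I_N * 'I_N} & cell_event q w].
Proof.
move=> N_ge3 w [Aw inside]; have N_gt0 : (0 < N)%N by apply: leq_trans N_ge3.
have N3 : 3 <= N%:R :> R by rewrite (ler_nat R 3).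
have in01 mu : mu \in [:: a; b; c; e] -> 0 <= theta mu w < 1.
  by move=> mu_in; apply: contrapT => out; apply: inside; exists mu; rewrite //= in_itv.
have [inb inc ine] : [/\ b \in [:: a; b; c; e], c \in [:: a; b; c; e] & e \in [:: a; b; c; e]].
  by rewrite !inE !eqxx !orbT.
have grid x i : grid_itv N i x -> i%:R / N%:R <= x < i%:R / N%:R + 1 / N%:R.
  by rewrite /grid_itv /= in_itv /= -natr1 mulrDl.
have [i /grid/andP[bi bi']] := grid_itvP N_gt0 (in01 b inb).
have [j /grid/andP[cj cj']] := grid_itvP N_gt0 (in01 c inc).
have [l /grid/andP[el el']] := grid_itvP N_gt0 (in01 e ine).
exists (i, j, l); first by rewrite mem_enum.
split; last by rewrite /grid_itv /= !in_itv /= -!natr1 !mulrDl; lra.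
have three : 3 / N%:R = 1 / N%:R + 1 / N%:R + 1 / N%:R :> R.
  by field; rewrite gt_eqF // (lt_le_trans _ N3).
have cell_w : cell_fiber (i, j, l) (theta a w).
  split; first by apply: in01; rewrite mem_head.
  exists (theta b w + theta c w + theta e w); last by rewrite !addrA; exact: Aw.
  by rewrite /cell_low /= three; apply/andP; split; lra.
have [t0_01 [T0 T0_cell At0]] : cell_fiber (i, j, l) (cell_center (i, j, l)).
  exact: (@xgetPex R 0 (cell_fiber (i, j, l)) (ex_intro _ _ cell_w)).
have [_ [T T_cell AT]] := cell_w.
have N1 : 3 / N%:R <= 1 :> R by rewrite ler_pdivrMr ?mul1r // (lt_le_trans _ N3).
have TT0 : `|T - T0| <= 3 / N%:R.
  by move: T_cell T0_cell => /andP[? ?] /andP[? ?]; rewrite ler_norml; apply/andP; split; lra.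
have := narrow_close nA AT At0 cell_w.1 t0_01 (le_trans TT0 N1).
by rewrite /= in_itv /= ler_norml => /andP[? ?]; apply/andP; split; lra.
Qed.

Lemma prob_sum4_grid N : (3 <= N)%N ->
  (P (sum4 @^-1` A) <= (2 * (delta + 3 / N%:R))%:E)%E.
Proof.
move=> N_ge3; have N_gt0 : (0 < N)%N by apply: leq_trans N_ge3.
have N0 : 0 < N%:R :> R by rewrite ltr0n.
have m_out01 mu : measurable (theta mu @^-1` ~` `[0%R, 1%R[).
  by apply: measurable_theta_preimage; apply: measurableC; exact: measurable_itv.
have mB : measurable outside_unit_cube by exact: measurable_seq_union.
have mS : measurable (sum4 @^-1` A) by rewrite -[_ @^-1` _]setTI; exact: measurable_sum4.
rewrite (measureDI P mS mB).
have inside := measure_seq_cover_le (mu := P) (measurableD mS mB) (@measurable_cell_event N)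
  (fun q _ => prob_cell_event q N_gt0) (sum4_cover N_ge3).
have out0 mu : mu \in [:: a; b; c; e] -> (P (theta mu @^-1` ~` `[0%R, 1%R[) <= 0%:E)%E.
  by rewrite prob_theta_outside01.
have outside := measure_seq_cover_le (mu := P) (measurableI _ _ mS mB) m_out01 out0
  (@subIsetr _ _ _).
apply: le_trans (leeD inside outside) _.
rewrite -EFinD lee_fin mul0rn addr0 -cardT !card_prod !card_ord -[_ *+ (N * N * N)]mulr_natr !natrM.
by rewrite le_eqVlt; apply/orP; left; apply/eqP; field; rewrite gt_eqF.
Qed.

Lemma prob_sum4_narrow : (P (sum4 @^-1` A) <= (2 * delta)%:E)%E.
Proof.
apply/lee_addgt0Pr => eps eps_gt0; pose N := (Num.truncn (6 / eps)).+3.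
have N0 : 0 < N%:R :> R by rewrite ltr0n.
have N_large : 6 / eps < N%:R.
  by apply: lt_le_trans (truncnS_gt _) _; rewrite ler_nat /N ltnS leqW.
apply: le_trans (prob_sum4_grid (N := N) _) _ => //.
rewrite -EFinD lee_fin mulrDr lerD2l (_ : 2 * (3 / N%:R) = 6 / N%:R); last by ring.
by rewrite ler_pdivrMr // mulrC -ler_pdivrMr // ltW.
Qed.

End IidUniform.

Definition box_site (L1 L2 : nat) (v : site) (i j : nat) : site :=
  (v.1 - 2 * (L1 : int) + (i : int), v.2 - 2 * (L2 : int) + 2 + (j : int)).

Definition box_sites (L1 L2 : nat) (v : site) : seq site :=
  [seq box_site L1 L2 v i j | i <- iota 0 (4 * L1), j <- iota 0 (4 * L2)].

Lemma box_sitesP L1 L2 v nu : reflect (in_box L1 L2 v nu) (nu \in box_sites L1 L2 v).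
Proof.
apply: (iffP allpairsP) => [[[i j] /=]|].
  rewrite !mem_iota !add0n => -[/andP[_ ?] /andP[_ ?] ->].
  by rewrite /in_box /box_site /=; split; apply/andP; split; lia.
case: nu => x y; rewrite /in_box /= => -[/andP[? ?] /andP[? ?]].
exists (absz (x - (v.1 - 2 * (L1 : int)))%R, absz (y - (v.2 - 2 * (L2 : int) + 2))%R).
by rewrite /= !mem_iota !add0n /box_site; split; [lia | lia | congr pair; lia].
Qed.

Definition box_roots (L1 L2 : nat) (v : site) : seq (site * nat) :=
  [seq (nu, k) | nu <- box_sites L1 L2 v, k <- iota 0 4].

Lemma size_box_roots L1 L2 v : size (box_roots L1 L2 v) = (16 * vol L1 L2)%N.
Proof. by rewrite !size_allpairs !size_iota /vol; lia. Qed.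

Section EigenPhases.
Variables (R : realType) (th : site -> R).

Definition orbit_sum (nu : site) : R :=
  th nu + th (p nu) + th (p (p nu)) + th (p (p (p nu))).

Definition eigenphase (x : site * nat) : R[i] := phase ((orbit_sum x.1 + x.2%:R) / 4).

Lemma spectrum_phase L1 L2 v : (2 %| v.1)%Z -> (2 %| v.2)%Z ->
  spectrum_on (ell2_on (in_box L1 L2 v)) (U_op (fun mu => phase (th mu))) =
  [set` map eigenphase (box_roots L1 L2 v)].
Proof.
move=> hv1 hv2; have prodE nu : cyc_prod (fun mu => phase (th mu)) nu = phase (orbit_sum nu).
  by rewrite /cyc_prod /orbit_sum !phaseD.
apply/seteqP; split => lam.
  move/(spectrum_onP _ _ hv1 hv2 (fun mu => phase_neq0 _)) => [nu /box_sitesP nu_in].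
  rewrite prodE => /expr4_eq_phaseP[k k_lt4 ->]; apply/mapP; exists (nu, k) => //.
  by apply/allpairsP; exists (nu, k); rewrite mem_iota.
move=> /mapP[_ /allpairsP[[nu k] /= [nu_in k_in ->]] ->].
apply/(spectrum_onP _ _ hv1 hv2 (fun mu => phase_neq0 _)); exists nu; first exact/box_sitesP.
rewrite prodE; apply/expr4_eq_phaseP; exists k => //.
by move: k_in; rewrite !inE => /or4P[] /eqP ->.
Qed.

End EigenPhases.

Lemma seq_argmin (T : eqType) (R : realDomainType) (f : T -> R) (s : seq T) :
  s != [::] -> exists2 x0, x0 \in s & forall x, x \in s -> f x0 <= f x.
Proof.
elim: s => // y [|y' s] IH _.
  by exists y => [|x]; rewrite mem_seq1 // => /eqP ->.
have [x0 x0_in x0_min] := IH isT.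
have [fy_le|fy_gt] := leP (f y) (f x0).
  exists y; first exact: mem_head.
  by move=> x; rewrite in_cons => /orP[/eqP -> // | /x0_min]; exact: le_trans.
exists x0; first by rewrite in_cons x0_in orbT.
by move=> x; rewrite in_cons => /orP[/eqP -> | /x0_min //]; exact: ltW.
Qed.

Lemma dist_set_seq_le (R : realType) (z : R[i]) (s : seq R[i]) (eta : R) : s != [::] ->
  dist_set z [set` s] <= eta <-> exists2 lam, lam \in s & Normc.normc (z - lam) <= eta.
Proof.
move=> s_neq0; split => [dist_le | [lam lam_in lam_le]].
  have [lam0 lam0_in lam0_min] := seq_argmin (fun lam => Normc.normc (z - lam)) s_neq0.
  exists lam0 => //; apply: le_trans dist_le; apply: lb_le_inf.
    by exists (Normc.normc (z - lam0)), lam0.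
  by move=> _ [lam lam_in <-]; exact: lam0_min.
apply: le_trans lam_le; apply: ge_inf; last by exists lam.
by exists 0 => _ [lam' _ <-]; exact: normc_ge0.
Qed.

Section PhaseBall.
Variables (R : realType) (z : R[i]) (eta : R) (k : nat).

Definition phase_ball : set R :=
  [set s | Normc.normc (z - phase ((s + k%:R) / 4)) <= eta].

Lemma narrow_phase_ball : narrow (4 * eta / cos 1) phase_ball.
Proof.
move=> s s' zs zs' ss'.
have distE : `|(s + k%:R) / 4 - (s' + k%:R) / 4| = `|s - s'| / 4.
  have -> : (s + k%:R) / 4 - (s' + k%:R) / 4 = (s - s') / 4 by ring.
  by rewrite normrM (gtr0_norm (x := 4^-1)) // invr_gt0.
by have := @phase_dist_le R z eta _ _ _ zs zs'; rewrite distE; lra.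
Qed.

Lemma measurable_phase_ball : measurable phase_ball.
Proof.
pose arg (s : R) := 2 * pi * ((s + k%:R) / 4).
have m_arg : measurable_fun setT arg.
  by apply: measurable_funM => //; apply: measurable_funM => //; apply: measurable_funD.
have m_cos := measurableT_comp (continuous_measurable_fun (@continuous_cos R)) m_arg.
have m_sin := measurableT_comp (continuous_measurable_fun (@continuous_sin R)) m_arg.
pose dist2 s := (complex.Re z - cos (arg s)) ^+ 2 + (complex.Im z - sin (arg s)) ^+ 2.
have m_dist2 : measurable_fun setT dist2.
  by apply: measurable_funD; apply: measurable_funX; apply: measurable_funB.
have m_dist := measurableT_comp (continuous_measurable_fun (@sqrt_continuous R)) m_dist2.
rewrite (_ : phase_ball = (fun s => Num.sqrt (dist2 s)) @^-1` `]-oo, eta]).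
  by rewrite -[_ @^-1` _]setTI; apply: m_dist => //; exact: measurable_itv.
apply/seteqP; split => s; rewrite /phase_ball /preimage /dist2 /= in_itv /=;
  by case: z.
Qed.

End PhaseBall.

Theorem proposition1 (R : realType) :
  exists C eps0 : R, 0 < C /\ 0 < eps0 /\
  forall (d : measure_display) (Omega : measurableType d)
         (P : probability Omega R) (theta : site -> Omega -> R),
  iid_uniform01 P theta ->
  forall (L1 L2 : nat) (eta : R), (0 < L1)%N -> (0 < L2)%N -> 0 < eta ->
  eta * (vol L1 L2)%:R <= eps0 ->
  forall v : site, (2 %| v.1)%Z -> (2 %| v.2)%Z ->
  forall z : R[i], Normc.normc z != 1 ->
  (P [set w | (dist_set z
        (spectrum_on (ell2_on (in_box L1 L2 v))
                     (U_op (fun mu => phase (theta mu w)))) <= eta)%R]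
  <= (C * eta * (vol L1 L2)%:R)%:E)%E.
Proof.
have c1 := @cos1_gt0 R.
exists (128 / cos 1), 1; split; first by rewrite divr_gt0.
split=> // d Omega P theta iid L1 L2 eta L1_gt0 L2_gt0 eta_gt0 _ v hv1 hv2 z _.
pose ev (x : site * nat) := sum4 theta x.1 (p x.1) (p (p x.1)) (p (p (p x.1)))
  @^-1` phase_ball z eta x.2.
have roots_neq0 w : map (eigenphase (theta ^~ w)) (box_roots L1 L2 v) != [::].
  by rewrite -size_eq0 size_map size_box_roots /vol; lia.
have evE : [set w | dist_set z (spectrum_on (ell2_on (in_box L1 L2 v))
    (U_op (fun mu => phase (theta mu w)))) <= eta] =
    [set w | exists2 x, x \in box_roots L1 L2 v & ev x w].
  apply/seteqP; split => w; rewrite /= spectrum_phase // dist_set_seq_le //.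
    by move=> [_ /mapP[x x_in ->] ?]; exists x.
  by move=> [x x_in ?]; exists (eigenphase (theta ^~ w) x) => //; apply: map_f.
have m_ev x : measurable (ev x).
  rewrite -[ev x]setTI; apply: (measurable_sum4 iid) => //; exact: measurable_phase_ball.
have prob_ev x : x \in box_roots L1 L2 v -> (P (ev x) <= (2 * (4 * eta / cos 1))%:E)%E.
  move=> _; apply: prob_sum4_narrow => //; first exact: uniq_cyc_orbit.
  - exact: measurable_phase_ball.
  - by rewrite divr_ge0 ?mulr_ge0 // ltW.
  - exact: narrow_phase_ball.
rewrite evE; apply: le_trans (measure_seq_cover_le (measurable_seq_union _ m_ev) m_ev prob_ev _) _ => //.
rewrite size_box_roots lee_fin -[_ *+ (16 * _)]mulr_natr natrM.
by rewrite le_eqVlt; apply/orP; left; apply/eqP; field; rewrite gt_eqF.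
Qed.
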